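(* Let $G$ be a finite group, $p$ a prime, and $n>0$ an integer with $\gcd(n,p)=1$. Then $\mathrm{Pow}(G)\cong \mathrm{Pow}(\mathbb{Z}_p\times\mathbb{Z}_p\times\mathbb{Z}_n)$ if and only if $G\cong \mathbb{Z}_p\times\mathbb{Z}_p\times\mathbb{Z}_n$.
   Context: All groups are finite. $\mathbb{Z}_k$ denotes the cyclic group of order $k$. For a group $X$, the power graph $\mathrm{Pow}(X)$ is the simple graph with vertex set $X$ in which two distinct vertices $x,y$ are adjacent if and only if $y\in\langle x\rangle$ or $x\in\langle y\rangle$. *)

From mathcomp Require Import all_boot all_fingroup all_algebra all_solvable.
Set Implicit Arguments. Unset Strict Implicit. Unset Printing Implicit Defensive.

Local Open Scope group_scope.

Definition pow_adj (gT : finGroupType) (x y : gT) : bool :=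
  (x != y) && ((y \in <[x]>) || (x \in <[y]>)).

Definition pow_graph_iso (gT hT : finGroupType) : Prop :=
  exists f : gT -> hT, bijective f /\ forall x y, pow_adj (f x) (f y) = pow_adj x y.

(* The cyclic group Z_k for k > 0, realised as 'I_k (additive group mod k). *)
Definition Zmod (k : nat) : finGroupType := 'I_k.-1.+1.

Definition ZppZn (p n : nat) : finGroupType := (Zmod p * Zmod p * Zmod n)%type.

From mathcomp Require Import all_boot all_fingroup all_algebra all_solvable.
Set Implicit Arguments. Unset Strict Implicit. Unset Printing Implicit Defensive.

(* A graph isomorphism h from Pow(Z_p x Z_p x Z_n) to Pow(G) preserves closed
   neighbourhoods and closed twin classes.  In H = Z_p x Z_p x Z_n the cyclic
   subgroups <(e, 1)>, e of order p, have order pn, are maximal, pairwise meet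
   in 0 x Z_n and cover H, and twin classes are exactly the generator sets of
   cyclic subgroups, of size totient of the order.  Comparing twin classes
   through h with the monotonicity of totient along divisibility shows that h
   maps each such cyclic subgroup onto a cyclic subgroup of G.  So G is covered
   by cyclic subgroups of order pn through a common subgroup K of order n;
   then K is central, g ^+ p lies in K, a Sylow p-subgroup P is elementary
   abelian of order p^2, and G = P x K. *)

Lemma totient_mul_prime q a : prime q -> 0 < a ->
  totient (q * a) = (if q %| a then q * totient a else q.-1 * totient a).
Proof.
move=> q_pr a_gt0; case: ifP => q_a; last first.
  by rewrite totient_coprime ?(totient_prime q_pr) // prime_coprime ?q_a.
rewrite -{1 2}(partnC q a_gt0) p_part; set k := logn q a; set r := a`_q^'.
have k_gt0 : 0 < k by rewrite /k lognE q_pr a_gt0 q_a.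
have q_r : coprime q r.
  by have := coprime_partC q a a; rewrite p_part coprime_pexpl.
rewrite mulnA -expnS !totient_coprime ?coprimeXl // !totient_pfactor //.
by rewrite mulnA -[in RHS]mulnCA -expnS prednK.
Qed.

Lemma totient_leqif_mul_prime q a : prime q -> 0 < a ->
  totient a <= totient (q * a) ?= iff (q == 2) && odd a.
Proof.
move=> q_pr a_gt0; have q_gt1 := prime_gt1 q_pr.
have ta_gt0 : 0 < totient a by rewrite totient_gt0.
rewrite totient_mul_prime //; split.
  by case: ifP => _; rewrite leq_pmull ?ltn_predRL ?prime_gt0.
rewrite -{1}[totient a]mul1n; case: ifP => q_a; rewrite eqn_pmul2r // eq_sym.
  rewrite gtn_eqF //; case: eqP => //= q2.
  by rewrite q2 dvdn2 in q_a; apply/esym/negbTE.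
rewrite -eqSS prednK ?prime_gt0 //; case: eqP => //= q2.
by rewrite q2 dvdn2 in q_a; rewrite (negbFE q_a).
Qed.

Lemma totient_leqif_mul k a : 0 < k -> 0 < a ->
  totient a <= totient (k * a) ?= iff (k == 1) || (k == 2) && odd a.
Proof.
elim/ltn_ind: k a => k IHk a k_gt0 a_gt0.
have [-> | k_neq1] := eqVneq k 1; first by rewrite mul1n; apply/leqif_refl.
have k_gt1 : 1 < k by rewrite ltn_neqAle eq_sym k_neq1.
have q_pr := pdiv_prime k_gt1; set q := pdiv k in q_pr *.
have [k' def_k] : exists k', k = k' * q.
  by exists (k %/ q); rewrite divnK ?pdiv_dvd.
have k'_gt0 : 0 < k' by move: k_gt0; rewrite def_k muln_gt0 => /andP[].
have k'_lt_k : k' < k by rewrite def_k ltn_Pmulr ?prime_gt1.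
have qa_gt0 : 0 < q * a by rewrite muln_gt0 prime_gt0.
have := leqif_trans (totient_leqif_mul_prime q_pr a_gt0) (IHk k' k'_lt_k _ k'_gt0 qa_gt0).
rewrite def_k -mulnA /=; congr (_ <= _ ?= iff _).
have [q2 | q_neq2] /= := eqVneq q 2.
  by rewrite q2 oddM /= andbF orbF -{2}[2]mul1n eqn_pmul2r // andbC.
apply/esym/negbTE; apply: contra q_neq2 => /andP[/eqP k2 _].
by rewrite /q def_k k2 pdiv_id.
Qed.

Lemma totient_dvdn_leq a b : 0 < b -> a %| b -> totient a <= totient b.
Proof.
move=> b_gt0 /dvdnP[k def_b]; move: b_gt0; rewrite def_b muln_gt0 => /andP[k_gt0 a_gt0].
exact: totient_leqif_mul.
Qed.

Lemma totient_dvdn_eq a b : 0 < b -> a %| b -> a != b -> totient a = totient b ->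
  b = a.*2 /\ odd a.
Proof.
move=> b_gt0 /dvdnP[k def_b]; move: b_gt0; rewrite def_b muln_gt0 => /andP[k_gt0 a_gt0].
move=> a_neq /eqP; rewrite (totient_leqif_mul k_gt0 a_gt0).
case/orP=> [/eqP k1 | /andP[/eqP-> odd_a]]; last by rewrite mul2n.
by rewrite k1 mul1n eqxx in a_neq.
Qed.

Lemma dvdn_chain_pfactor m d : 1 < d -> d < m -> d %| m ->
    (forall e, e %| m -> (d %| e) || (e %| d)) ->
  exists2 q, prime q & exists2 r, 1 < r & m = q ^ r.
Proof.
move=> d_gt1 d_lt_m d_m chain; have m_gt0 : 0 < m by apply: leq_trans d_lt_m.
have q_pr := pdiv_prime d_gt1; set q := pdiv d in q_pr *.
have q_d : q %| d by apply: pdiv_dvd.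
have m_q'_d : m`_q^' %| d.
  have /orP[d_m_q' | //] := chain _ (dvdn_part q^' m).
  have := part_pnat q^' m; rewrite p'natE // => /negP[].
  exact: dvdn_trans q_d d_m_q'.
have d_m_q : d %| m`_q.
  have /orP[// | m_q_d] := chain _ (dvdn_part q m).
  have : m %| d by rewrite -(partnC q m_gt0) Gauss_dvd ?coprime_partC ?m_q_d.
  by move/(dvdn_leq (ltnW d_gt1)); rewrite leqNgt d_lt_m.
have m_q'1 : m`_q^' = 1.
  apply/eqP; rewrite -dvdn1 -(eqnP (coprime_partC q m m)) dvdn_gcd dvdnn andbT.
  exact: dvdn_trans m_q'_d d_m_q.
have [r m_eq] : exists r, m = q ^ r.
  by exists (logn q m); rewrite -p_part -{1}(partnC q m_gt0) m_q'1 muln1.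
exists q => //; exists r => //.
move: d_m d_lt_m d_gt1; rewrite m_eq => /(dvdn_pfactor _ _ q_pr)[s _ ->].
rewrite ltn_exp2l ?(prime_gt1 q_pr) // => s_lt.
by case: s s_lt => [|s] s_lt; rewrite ?expn0 // => _; apply: leq_ltn_trans s_lt.
Qed.

Lemma pfactor_leq_sqr_totient q r : prime q -> 1 < r -> q ^ r <= totient (q ^ r) ^ 2.
Proof.
move=> q_pr r_gt1; have q_gt0 := prime_gt0 q_pr; have r_gt0 := ltnW r_gt1.
apply: (@leq_trans ((q ^ r.-1) ^ 2)); last first.
  by rewrite leq_sqr totient_pfactor // leq_pmull // ltn_predRL prime_gt1.
rewrite -expnM leq_pexp2l //.
by case: r r_gt1 {r_gt0} => [|r] //= r_gt0; rewrite muln2 -addnn -addn1 leq_add2l.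
Qed.

Local Open Scope group_scope.

Section PowerGraph.
Variable T : finGroupType.
Implicit Types x y u v w : T.

(* pow_cmp x y holds iff x = y or x and y are adjacent in Pow(T), so pow_nbhd
   and pow_twins are closed neighbourhoods and closed twin classes. *)
Definition pow_cmp x y := (y \in <[x]>) || (x \in <[y]>).
Definition pow_nbhd x := [set y | pow_cmp x y].
Definition pow_twins x := [set w | pow_nbhd w == pow_nbhd x].

Lemma pow_cmpC x y : pow_cmp x y = pow_cmp y x.
Proof. by rewrite /pow_cmp orbC. Qed.

Lemma pow_cmpxx x : pow_cmp x x.
Proof. by rewrite /pow_cmp cycle_id. Qed.

Lemma in_pow_nbhd x y : (y \in pow_nbhd x) = pow_cmp x y.
Proof. by rewrite inE. Qed.

Lemma pow_nbhd1 : pow_nbhd 1 = [set: T].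
Proof. by apply/setP=> v; rewrite !inE /pow_cmp group1 orbT. Qed.

Lemma cycle_sub_pow_nbhd x : <[x]> \subset pow_nbhd x.
Proof. by apply/subsetP=> v x_v; rewrite in_pow_nbhd /pow_cmp x_v. Qed.

Lemma mem_cycle_dvdn x u v : u \in <[x]> -> v \in <[x]> ->
  (u \in <[v]>) = (#[u] %| #[v])%N.
Proof.
move=> u_x v_x; rewrite -cycle_subG (cardSg_cyclic (cycle_cyclic x)) //;
  by rewrite cycle_subG.
Qed.

Lemma pow_cmp_cycle x u v : u \in <[x]> -> v \in <[x]> ->
  pow_cmp u v = (#[v] %| #[u])%N || (#[u] %| #[v])%N.
Proof.
by move=> u_x v_x; rewrite /pow_cmp (mem_cycle_dvdn u_x v_x) (mem_cycle_dvdn v_x u_x).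
Qed.

Lemma pow_twins_refl x : x \in pow_twins x.
Proof. by rewrite inE. Qed.

Lemma pow_twins_nbhd x w : w \in pow_twins x -> pow_nbhd w = pow_nbhd x.
Proof. by rewrite inE => /eqP. Qed.

Lemma pow_twins_cmp x w : w \in pow_twins x -> pow_cmp x w.
Proof.
by move/pow_twins_nbhd=> nbhd_w; rewrite -in_pow_nbhd -nbhd_w in_pow_nbhd pow_cmpxx.
Qed.

Lemma cycle_eq_pow_twins x w : <[x]> = <[w]> -> w \in pow_twins x.
Proof.
move=> x_w; rewrite inE; apply/eqP/setP=> v; rewrite !in_pow_nbhd /pow_cmp.
by rewrite x_w -!cycle_subG x_w.
Qed.

Lemma totient_leq_card_pow_twins x : totient #[x] <= #|pow_twins x|.
Proof.
rewrite totient_gen; apply/subset_leq_card/subsetP=> w.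
by rewrite inE /generator => /eqP/cycle_eq_pow_twins.
Qed.

Lemma pow_twins_sub_cycle x :
  (forall w, w \in pow_twins x -> #[w] <= #[x]) -> pow_twins x \subset <[x]>.
Proof.
move=> x_max; apply/subsetP=> w w_tw; have /orP[// | x_w] := pow_twins_cmp w_tw.
suff <- : <[w]> = <[x]> by apply: cycle_id.
by apply/esym/eqP; rewrite eqEcard cycle_subG x_w -!orderE x_max.
Qed.

Lemma order_expg_divn x e : (e %| #[x])%N -> #[x ^+ (#[x] %/ e)] = e.
Proof.
move=> /dvdnP[k def_x]; have := order_gt0 x; rewrite def_x muln_gt0 => /andP[k_gt0 e_gt0].
by rewrite orderXdiv def_x ?mulnK ?mulKn // dvdn_mulr.
Qed.

Lemma cycle_chain_pfactor x w : w \in <[x]> -> w != 1 -> <[w]> != <[x]> ->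
    <[x]> \subset pow_nbhd w ->
  exists2 q, prime q & exists2 r, 1 < r & #[x] = (q ^ r)%N.
Proof.
move=> w_x w_neq1 w_nx /subsetP x_nbhd.
have w_dvd : (#[w] %| #[x])%N by apply: order_dvdG.
apply: (dvdn_chain_pfactor _ _ w_dvd).
- by rewrite ltn_neqAle order_gt0 andbT eq_sym order_eq1.
- rewrite ltn_neqAle dvdn_leq ?order_gt0 // andbT.
  by apply: contra w_nx => /eqP o_w; rewrite eqEcard cycle_subG w_x -!orderE o_w /=.
move=> e e_x; have v_x : x ^+ (#[x] %/ e) \in <[x]> := mem_cycle x _.
have := x_nbhd _ v_x; rewrite in_pow_nbhd (pow_cmp_cycle w_x v_x).
by rewrite order_expg_divn // orbC.
Qed.

Lemma pfactor_cycle_cmp x q r : prime q -> #[x] = (q ^ r)%N ->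
  {in <[x]> &, forall u v, pow_cmp u v}.
Proof.
move=> q_pr x_qr u v u_x v_x; rewrite (pow_cmp_cycle u_x v_x).
have := order_dvdG u_x; have := order_dvdG v_x; rewrite -orderE x_qr.
case/(dvdn_pfactor _ _ q_pr)=> j _ ->; case/(dvdn_pfactor _ _ q_pr)=> i _ ->.
by rewrite !dvdn_Pexp2l ?prime_gt1 // leq_total.
Qed.

Lemma pow_nbhd_max_order y : (forall u, #[u] %| #[y])%N -> pow_nbhd y = <[y]>.
Proof.
move=> y_max; apply/eqP; rewrite eqEsubset cycle_sub_pow_nbhd andbT.
apply/subsetP=> u; rewrite in_pow_nbhd /pow_cmp => /orP[// | y_u].
suff -> : <[y]> = <[u]> by apply: cycle_id.
apply/eqP; rewrite eqEcard cycle_subG y_u -!orderE.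
by rewrite dvdn_leq ?order_gt0.
Qed.

End PowerGraph.

Section AbelianTwins.
Variables (T : finGroupType) (p : nat).
Hypotheses (p_pr : prime p) (abelT : abelian [set: T]).
Hypothesis p2_ndvd : forall v : T, ~~ (p ^ 2 %| #[v])%N.
Hypothesis cycle_miss_p : forall v : T, exists2 u : T, #[u] = p & u \notin <[v]>.

Lemma pow_twins_cycle_sub (v w : T) :
  pow_nbhd v = pow_nbhd w -> w \in <[v]> -> <[w]> = <[v]>.
Proof.
move=> nbhd_vw w_v; apply/eqP/negPn/negP => w_nv.
have [w1 | w_neq1] := eqVneq w 1.
  have [u u_p u_nv] := cycle_miss_p v.
  have : u \in pow_nbhd v by rewrite nbhd_vw w1 pow_nbhd1 inE.
  rewrite in_pow_nbhd /pow_cmp (negbTE u_nv) /= => v_u.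
  have v_neq1 : #[v] != 1%N by rewrite order_eq1; apply: contraNneq w_nv => ->; rewrite w1.
  have v_p : #[v] = p.
    by apply/(prime_nt_dvdP p_pr v_neq1); rewrite -u_p order_dvdG.
  suff v_u_cyc : <[v]> = <[u]> by rewrite v_u_cyc cycle_id in u_nv.
  by apply/eqP; rewrite eqEcard cycle_subG v_u -!orderE v_p u_p /=.
have v_nbhd : <[v]> \subset pow_nbhd w by rewrite -nbhd_vw cycle_sub_pow_nbhd.
have [q q_pr [r r_gt1 v_qr]] := cycle_chain_pfactor w_v w_neq1 w_nv v_nbhd.
have v_p' : coprime #[v] p.
  rewrite v_qr coprime_pexpl ?(ltnW r_gt1) // prime_coprime // dvdn_prime2 //.
  apply: contra (p2_ndvd v) => /eqP <-; rewrite v_qr dvdn_exp2l //.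
have w_p' : coprime #[w] p by apply: coprime_dvdl v_p'; apply: order_dvdG.
have [e e_p _] := cycle_miss_p 1.
have we_cyc : <[w * e]> = <[w]> * <[e]>.
  by apply: cycleM; [apply: (centsP abelT); rewrite ?inE | rewrite e_p].
have : w * e \in pow_nbhd v.
  rewrite nbhd_vw in_pow_nbhd /pow_cmp we_cyc orbC.
  by rewrite -[X in X \in _]mulg1 mem_mulg ?cycle_id ?group1.
rewrite in_pow_nbhd /pow_cmp => /orP[we_v | v_we].
  have : e \in <[v]> by rewrite -(mulKg w e) groupM ?groupV.
  move/order_dvdG; rewrite e_p => p_v.
  by move: v_p'; rewrite coprime_sym prime_coprime ?p_v.
have : (#[v] %| #[w] * p)%N.
  rewrite -e_p -TI_cardMg -?we_cyc ?order_dvdG //.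
  by apply: coprime_TIg; rewrite -!orderE e_p.
rewrite Gauss_dvdl // => v_w; case/negP: w_nv.
by rewrite eqEcard cycle_subG w_v -!orderE dvdn_leq.
Qed.

Lemma pow_twins_cycle (v w : T) : pow_nbhd v = pow_nbhd w -> <[v]> = <[w]>.
Proof.
move=> nbhd_vw; have : w \in pow_nbhd v by rewrite nbhd_vw in_pow_nbhd pow_cmpxx.
rewrite in_pow_nbhd /pow_cmp => /orP[w_v | v_w].
  by rewrite (pow_twins_cycle_sub nbhd_vw w_v).
by rewrite (pow_twins_cycle_sub (esym nbhd_vw) v_w).
Qed.

End AbelianTwins.

Section PowerGraphIso.
Variables gT hT : finGroupType.
Variables (h : hT -> gT) (f : gT -> hT).
Hypotheses (hK : cancel h f) (fK : cancel f h).
Hypothesis h_cmp : forall u v, pow_cmp (h u) (h v) = pow_cmp u v.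

Let h_inj : injective h := can_inj hK.

Lemma card_pow_iso : #|gT| = #|hT|.
Proof. by apply/esym/bij_eq_card; exists f. Qed.

Lemma pow_nbhd_img u : pow_nbhd (h u) = h @: pow_nbhd u.
Proof.
by apply/setP=> z; rewrite -[z]fK mem_imset // !in_pow_nbhd h_cmp.
Qed.

Lemma pow_twins_img u : pow_twins (h u) = h @: pow_twins u.
Proof.
apply/setP=> z; rewrite -[z]fK mem_imset //.
by rewrite !inE !pow_nbhd_img (inj_eq (imset_inj h_inj)).
Qed.

Lemma card_pow_twins_img u : #|pow_twins (h u)| = #|pow_twins u|.
Proof. by rewrite pow_twins_img card_imset. Qed.

Variable y : hT.
Hypotheses (nbhd_y : pow_nbhd y = <[y]>) (y_lt : #[y] < #|hT|).

Section MaxTwin.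
Variable x : gT.
Hypothesis x_twin : x \in pow_twins (h y).
Hypothesis x_max : forall w, w \in pow_twins (h y) -> #[w] <= #[x].

Lemma pow_twins_max : pow_twins x = pow_twins (h y).
Proof. by apply/setP=> w; rewrite !inE (pow_twins_nbhd x_twin). Qed.

Lemma pow_nbhd_max : pow_nbhd x = h @: <[y]>.
Proof. by rewrite (pow_twins_nbhd x_twin) pow_nbhd_img nbhd_y. Qed.

Lemma pow_twins_max_sub : pow_twins x \subset <[x]>.
Proof. by apply: pow_twins_sub_cycle; rewrite pow_twins_max. Qed.

Lemma one_notin_pow_twins_max : 1 \notin pow_twins x.
Proof.
apply/negP=> /pow_twins_nbhd; rewrite pow_nbhd1 pow_nbhd_max => img_y.
by move: y_lt; rewrite -card_pow_iso -cardsT img_y card_imset // ltnn.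
Qed.

Lemma card_pow_twins_max : #|pow_twins x| < #[x].
Proof.
rewrite orderE; apply/proper_card/properP; split; first exact: pow_twins_max_sub.
by exists 1; rewrite ?group1 ?one_notin_pow_twins_max.
Qed.

Lemma mem_img_cycle_max u : u \in <[y]> -> (h u \in <[x]>) || (x \in <[h u]>).
Proof. by move=> u_y; rewrite -/(pow_cmp x (h u)) -in_pow_nbhd pow_nbhd_max imset_f. Qed.

Lemma img_cycle_max : pow_nbhd x \subset <[x]> -> h @: <[y]> = <[x]>.
Proof.
by move=> nbhd_x; apply/eqP; rewrite -pow_nbhd_max eqEsubset nbhd_x cycle_sub_pow_nbhd.
Qed.

Lemma pow_nbhd_max_sub_prime : prime #[y] -> pow_nbhd x \subset <[x]>.
Proof.
move=> y_pr; have gen_y u : u \in <[y]> -> u != 1 -> h u \in pow_twins x.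
  move=> u_y u_neq1; rewrite pow_twins_max pow_twins_img imset_f //.
  apply/cycle_eq_pow_twins/eqP; rewrite eq_sym eqEcard cycle_subG u_y -!orderE /=.
  have /(prime_nt_dvdP y_pr) -> // := order_dvdG u_y.
  by rewrite order_eq1.
apply/subsetP=> z; rewrite pow_nbhd_max => /imsetP[u u_y ->].
have [u1 | u_neq1] := eqVneq u 1.
  have : 1 \in h @: <[y]> by rewrite -pow_nbhd_max in_pow_nbhd /pow_cmp group1.
  case/imsetP=> u0 u0_y h_u0; have [u01 | u0_neq1] := eqVneq u0 1.
    by rewrite u1 -u01 -h_u0 group1.
  by have := gen_y u0 u0_y u0_neq1; rewrite -h_u0 (negbTE one_notin_pow_twins_max).
exact: (subsetP pow_twins_max_sub) (gen_y u u_y u_neq1).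
Qed.

Section CoprimeOrder.
Variables a b : nat.
Hypothesis hT_twins : forall u v : hT, pow_nbhd u = pow_nbhd v -> <[u]> = <[v]>.
Hypotheses (y_ab : #[y] = (a * b)%N) (ab_coprime : coprime a b).
Hypotheses (a_gt1 : 1 < a) (b_gt1 : 1 < b).

Lemma card_pow_twins_img_totient u : #|pow_twins (h u)| = totient #[u].
Proof.
rewrite card_pow_twins_img; apply/eqP; rewrite eqn_leq totient_leq_card_pow_twins andbT.
rewrite totient_gen; apply/subset_leq_card/subsetP=> w.
by rewrite !inE /generator => /eqP/hT_twins->.
Qed.

Lemma totient_max_leq u : x \in <[h u]> -> totient #[x] <= totient #[u].
Proof.
move=> x_hu; rewrite -card_pow_twins_img_totient.
apply: leq_trans (totient_leq_card_pow_twins _).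
exact: totient_dvdn_leq (order_gt0 _) (order_dvdG x_hu).
Qed.

Lemma card_pow_twins_max_totient : #|pow_twins x| = totient (a * b).
Proof. by rewrite pow_twins_max card_pow_twins_img_totient y_ab. Qed.

(* If a twin w of x did not generate <[x]>, then <[x]> would be a chain of
   order q ^ r lying below the images of two incomparable elements of orders
   a and b of <[y]>; the resulting bound q ^ r <= totient a * totient b
   contradicts card_pow_twins_max. *)
Lemma pow_twins_max_gen w : w \in pow_twins x -> <[w]> = <[x]>.
Proof.
move=> w_tw; apply/eqP/negPn/negP => w_nx.
have w_x := subsetP pow_twins_max_sub w w_tw.
have w_neq1 : w != 1 by apply: contraTneq w_tw => ->; apply: one_notin_pow_twins_max.
have x_nbhd : <[x]> \subset pow_nbhd w.
  by rewrite (pow_twins_nbhd w_tw) cycle_sub_pow_nbhd.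
have [q q_pr [r r_gt1 x_qr]] := cycle_chain_pfactor w_x w_neq1 w_nx x_nbhd.
have x_chain := pfactor_cycle_cmp q_pr x_qr.
have below u v : u \in <[y]> -> v \in <[y]> -> ~~ pow_cmp u v -> x \in <[h u]>.
  move=> u_y v_y; rewrite -h_cmp; apply: contraR => hu_nx.
  have := mem_img_cycle_max u_y; rewrite (negbTE hu_nx) orbF => hu_x.
  have /orP[hv_x | x_hv] := mem_img_cycle_max v_y; first exact: x_chain.
  by rewrite /pow_cmp (subsetP _ _ hu_x) ?orbT // cycle_subG.
have ya_y : y ^+ b \in <[y]> := mem_cycle y b.
have yb_y : y ^+ a \in <[y]> := mem_cycle y a.
have o_ya : #[y ^+ b] = a by rewrite orderXdiv y_ab ?dvdn_mull // mulnK // ltnW.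
have o_yb : #[y ^+ a] = b by rewrite orderXdiv y_ab ?dvdn_mulr // mulKn // (ltnW a_gt1).
have ya_yb : ~~ pow_cmp (y ^+ b) (y ^+ a).
  rewrite (pow_cmp_cycle ya_y yb_y) o_ya o_yb; apply/norP; split.
    apply: contraL b_gt1 => /coprime_dvdl/(_ ab_coprime).
    by rewrite /coprime gcdnn => /eqP->.
  apply: contraL a_gt1 => /coprime_dvdr/(_ ab_coprime).
  by rewrite /coprime gcdnn => /eqP->.
have yb_ya : ~~ pow_cmp (y ^+ a) (y ^+ b) by rewrite pow_cmpC.
have := totient_max_leq (below _ _ ya_y yb_y ya_yb).
have := totient_max_leq (below _ _ yb_y ya_y yb_ya); rewrite o_ya o_yb.
move=> le_b le_a; have := card_pow_twins_max; rewrite card_pow_twins_max_totient.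
rewrite totient_coprime // x_qr ltnNge; apply/negP/negPn.
apply: leq_trans (pfactor_leq_sqr_totient q_pr r_gt1) _.
by rewrite -x_qr expnS expn1 leq_mul.
Qed.

Lemma totient_order_max : totient #[x] = totient (a * b).
Proof.
apply/eqP; rewrite eqn_leq -card_pow_twins_max_totient totient_leq_card_pow_twins /=.
rewrite totient_gen; apply/subset_leq_card/subsetP=> w w_tw.
by rewrite inE /generator (pow_twins_max_gen w_tw).
Qed.

(* An element z above x but outside <[x]> would be the image of some u of
   <[y]> with totient #[u] = totient #[y], hence of odd order #[y] / 2; the
   involution of <[y]> then maps to an element incomparable with z that is
   neither in <[x]> nor above x. *)
Lemma pow_nbhd_max_sub_coprime : pow_nbhd x \subset <[x]>.
Proof.
have ab_gt0 : 0 < a * b by rewrite muln_gt0 ltnW // ltnW.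
have ab_ge4 : 4 <= a * b by apply: (@leq_mul 2 2).
apply/subsetP=> z z_nbhd; have z_img := z_nbhd; rewrite pow_nbhd_max in z_img.
have /imsetP[u u_y def_z] := z_img; move: z_nbhd; rewrite in_pow_nbhd /pow_cmp.
case/orP=> [// | x_z]; apply: contraT => z_nx.
have u_ntw : u \notin pow_twins y.
  apply: contra z_nx => u_tw; apply: (subsetP pow_twins_max_sub).
  by rewrite pow_twins_max pow_twins_img def_z imset_f.
have u_dvd : (#[u] %| a * b)%N by rewrite -y_ab order_dvdG.
have u_neq : #[u] != (a * b)%N.
  apply: contra u_ntw => /eqP o_u; apply: cycle_eq_pow_twins; apply/eqP.
  by rewrite eq_sym eqEcard cycle_subG u_y -!orderE o_u y_ab /=.
have [ab_2u odd_u] : (a * b)%N = #[u].*2 /\ odd #[u].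
  apply: totient_dvdn_eq => //; apply/eqP; rewrite eqn_leq totient_dvdn_leq //=.
  by rewrite -totient_order_max totient_max_leq // -def_z.
have t_y : y ^+ #[u] \in <[y]> := mem_cycle y _.
have o_t : #[y ^+ #[u]] = 2.
  by rewrite orderXdiv y_ab ab_2u -mul2n ?mulnK ?dvdn_mull.
have u_t : ~~ pow_cmp u (y ^+ #[u]).
  rewrite (pow_cmp_cycle u_y t_y) o_t dvdn2 odd_u /=.
  apply: contraL ab_ge4 => /(dvdn_leq (isT : 0 < 2)); rewrite ab_2u -ltnNge.
  by case: #[u] odd_u => [|[|[]]].
have := mem_img_cycle_max t_y; case/orP=> [ht_x | x_ht].
  by case/negP: u_t; rewrite -h_cmp -def_z /pow_cmp (subsetP _ _ ht_x) ?cycle_subG.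
have := totient_max_leq x_ht; rewrite totient_order_max o_t (totient_prime (isT : prime 2)).
by rewrite leqNgt totient_gt1 (leq_trans _ ab_ge4).
Qed.

End CoprimeOrder.
End MaxTwin.

Lemma pow_iso_img_cycle_prime : prime #[y] -> exists x, h @: <[y]> = <[x]>.
Proof.
move=> y_pr; have [x x_twin x_max] := arg_maxnP (fun w => #[w]) (pow_twins_refl (h y)).
by exists x; apply: (img_cycle_max x_twin); apply: pow_nbhd_max_sub_prime.
Qed.

Lemma pow_iso_img_cycle_coprime a b :
    (forall u v : hT, pow_nbhd u = pow_nbhd v -> <[u]> = <[v]>) ->
    #[y] = (a * b)%N -> coprime a b -> 1 < a -> 1 < b ->
  exists x, h @: <[y]> = <[x]>.
Proof.
move=> hT_twins y_ab ab_coprime a_gt1 b_gt1.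
have [x x_twin x_max] := arg_maxnP (fun w => #[w]) (pow_twins_refl (h y)).
exists x; apply: (img_cycle_max x_twin).
exact: (pow_nbhd_max_sub_coprime x_twin x_max hT_twins y_ab ab_coprime a_gt1 b_gt1).
Qed.

End PowerGraphIso.

Lemma pow_graph_iso_cmp (gT hT : finGroupType) : pow_graph_iso gT hT ->
  exists h : hT -> gT, exists f : gT -> hT,
    [/\ cancel h f, cancel f h & forall u v, pow_cmp (h u) (h v) = pow_cmp u v].
Proof.
case=> f [[h fK hK] f_adj]; exists h, f; split=> // u v.
have [-> | u_neq_v] := eqVneq u v; first by rewrite !pow_cmpxx.
have := f_adj (h u) (h v); rewrite !hK /pow_adj u_neq_v.
by rewrite (inj_eq (can_inj hK)) u_neq_v.
Qed.

Lemma isog_pow_graph_iso (gT hT : finGroupType) :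
  [set: gT] \isog [set: hT] -> pow_graph_iso gT hT.
Proof.
case/isogP=> phi inj_phi im_phi.
have phi_inj : injective phi by move=> x y; apply: (injmP inj_phi); rewrite inE.
exists phi; split.
  by apply: inj_card_bij phi_inj _; rewrite -!cardsT -im_phi card_injm.
have phi_cycle x y : (phi y \in <[phi x]>) = (y \in <[x]>).
  rewrite -morphim_cycle ?inE //.
  by rewrite -{2}(injmK inj_phi (subsetT <[x]>)) !inE.
by move=> x y; rewrite /pow_adj (inj_eq phi_inj) !phi_cycle.
Qed.

Lemma card_Zmod k : 0 < k -> #|Zmod k| = k.
Proof. by move=> k_gt0; rewrite card_ord prednK. Qed.

Lemma expg_pair (gT1 gT2 : finGroupType) (u : gT1 * gT2) k :
  u ^+ k = (u.1 ^+ k, u.2 ^+ k).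
Proof. by elim: k => [| k IHk] //; rewrite !expgS IHk. Qed.

Lemma expg_Zmod k (z : Zmod k) : 0 < k -> z ^+ k = 1.
Proof. by move=> k_gt0; have := expg_cardG (in_setT z); rewrite cardsT card_Zmod. Qed.

Section ZppZn.
Variables p n : nat.
Hypotheses (p_pr : prime p) (n_gt0 : 0 < n) (np_coprime : coprime n p).
Let p_gt0 : 0 < p := prime_gt0 p_pr.
Local Notation E := (Zmod p * Zmod p)%type.
Local Notation H := (ZppZn p n).

Lemma card_ZppZn : #|H| = (p ^ 2 * n)%N.
Proof. by rewrite !card_prod !card_Zmod. Qed.

Lemma ZppZn_abelian : abelian [set: H].
Proof.
apply/centsP=> [[[a1 a2] c] _ [[b1 b2] d] _].
by rewrite /commute; congr (_, _); [congr (_, _) |]; apply: Zp_mulgC.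
Qed.

Lemma expg_E (e : E) : e ^+ p = 1.
Proof. by rewrite expg_pair !expg_Zmod. Qed.

Lemma order_E (e : E) : e != 1 -> #[e] = p.
Proof. by move=> e_neq1; apply: nt_prime_order; rewrite ?expg_E. Qed.

Lemma order_dvdn_ZppZn (u : H) : (#[u] %| p * n)%N.
Proof.
rewrite order_dvdn expg_pair expgM expg_E expg1n mulnC expgM expg_Zmod //.
by rewrite expg1n.
Qed.

Lemma ZppZn_p2_ndvd (u : H) : ~~ (p ^ 2 %| #[u])%N.
Proof.
apply: contraL np_coprime => /dvdn_trans/(_ (order_dvdn_ZppZn u)).
by rewrite expnS expn1 dvdn_pmul2l // coprime_sym prime_coprime // => ->.
Qed.

Local Notation elem := (setX [set: E] 1 : {set H}).
Local Notation cyc := (setX 1 [set: Zmod n] : {set H}).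

Lemma card_elem : #|elem| = (p ^ 2)%N.
Proof. by rewrite cardsX cards1 cardsT card_prod !card_Zmod // muln1. Qed.

Lemma card_cyc : #|cyc| = n.
Proof. by rewrite cardsX cards1 cardsT card_Zmod // mul1n. Qed.

Lemma elem_abelem : p.-abelem elem.
Proof.
apply/(abelemP p_pr); split; first exact: abelianS (subsetT _) ZppZn_abelian.
by move=> [e c]; rewrite in_setX inE => /set1gP->; rewrite expg_pair /= expg_E expg1n.
Qed.

Lemma ZppZn_cycle_miss_p (v : H) : exists2 u : H, #[u] = p & u \notin <[v]>.
Proof.
have /subsetPn[u u_elem u_nv] : ~~ (elem \subset <[v]>).
  apply: contraL (cycle_cyclic v) => /cyclicS cyc_v; apply/negP=> /cyc_v.
  by rewrite (abelem_cyclic elem_abelem) card_elem pfactorK.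
exists u => //; apply: (abelem_order_p elem_abelem u_elem).
by apply: contraNneq u_nv => ->; apply: group1.
Qed.

Lemma ZppZn_twins (u v : H) : pow_nbhd u = pow_nbhd v -> <[u]> = <[v]>.
Proof. exact: pow_twins_cycle p_pr ZppZn_abelian ZppZn_p2_ndvd ZppZn_cycle_miss_p u v. Qed.

Lemma cycle_cyc : <[(1, Zp1) : H]> = cyc.
Proof. by rewrite Zp_cycle -morphim_pair1g morphim_cycle ?inE. Qed.

Definition line (e : E) : H := (e, Zp1).

Lemma cycle_line (e : E) : e != 1 -> <[line e]> = setX <[e]> [set: Zmod n].
Proof.
move=> e_neq1; have -> : line e = (e, 1) * (1, Zp1).
  by rewrite /line; congr (_, _); rewrite /= ?mulg1 ?mul1g.
have cyc_e1 : <[(e, 1) : H]> = setX <[e]> 1 by rewrite -morphim_pairg1 morphim_cycle ?inE.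
rewrite cycleM ?cyc_e1 ?cycle_cyc ?setX_prod //.
  by apply: (centsP ZppZn_abelian); rewrite inE.
rewrite /order cyc_e1 cycle_cyc card_cyc cardsX cards1 muln1 -orderE order_E //.
by rewrite coprime_sym.
Qed.

Lemma order_line (e : E) : e != 1 -> #[line e] = (p * n)%N.
Proof.
by move=> e_neq1; rewrite /order cycle_line // cardsX cardsT card_Zmod // -orderE order_E.
Qed.

Lemma pow_nbhd_line (e : E) : e != 1 -> pow_nbhd (line e) = <[line e]>.
Proof.
by move=> e_neq1; apply: pow_nbhd_max_order => u; rewrite order_line ?order_dvdn_ZppZn.
Qed.

Lemma order_line_lt (e : E) : e != 1 -> #[line e] < #|H|.
Proof.
move=> e_neq1; rewrite order_line // card_ZppZn ltn_pmul2r // expnS expn1.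
by rewrite ltn_Pmull ?prime_gt1.
Qed.

Lemma cyc_sub_line (e : E) : e != 1 -> cyc \subset <[line e]>.
Proof. by move=> e_neq1; rewrite cycle_line // setXS ?sub1G. Qed.

Definition e1 : E := (Zp1, 1).
Definition e2 : E := (1, Zp1).

Lemma Zp1_neq1 : (Zp1 : Zmod p) != 1.
Proof. by rewrite -order_eq1 order_Zp1 prednK // gtn_eqF // prime_gt1. Qed.

Lemma e1_neq1 : e1 != 1.
Proof. by apply/eqP=> [[/eqP]]; apply/negP: Zp1_neq1. Qed.

Lemma e2_neq1 : e2 != 1.
Proof. by apply/eqP=> [[/eqP]]; apply/negP: Zp1_neq1. Qed.

Lemma line_cap : <[line e1]> :&: <[line e2]> = cyc.
Proof.
have cyc_e1 : <[e1]> = setX [set: Zmod p] 1.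
  by rewrite Zp_cycle -morphim_pairg1 morphim_cycle ?inE.
have cyc_e2 : <[e2]> = setX 1 [set: Zmod p].
  by rewrite Zp_cycle -morphim_pair1g morphim_cycle ?inE.
rewrite !cycle_line ?e1_neq1 ?e2_neq1 // cyc_e1 cyc_e2.
by apply/setP=> [[[a1 a2] c]]; rewrite !inE /= !andbT andbC.
Qed.

Lemma mem_cycle_line (u : H) : exists2 e, e != 1 & u \in <[line e]>.
Proof.
case: u => [e c]; have [-> | e_neq1] := eqVneq e 1.
  by exists e1; rewrite ?e1_neq1 // cycle_line ?e1_neq1 // inE group1 inE.
by exists e; rewrite // cycle_line // inE cycle_id inE.
Qed.

Lemma dprod_isog_ZppZn (gT : finGroupType) (G P K : {group gT}) :
    P \x K = G -> p.-abelem P -> #|P| = (p ^ 2)%N -> cyclic K -> #|K| = n ->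
  G \isog [set: H].
Proof.
move=> defG abelP card_P cyc_K card_K.
have defH : elem \x cyc = [set: H].
  by rewrite setX_dprod; apply/setP=> u; rewrite !inE.
apply: isog_dprod defG defH _ _.
  by rewrite (isog_abelem_card _ abelP) elem_abelem card_elem card_P /=.
by rewrite (isog_cyclic_card _ cyc_K) /= -cycle_cyc cycle_cyclic cycle_cyc card_cyc card_K /=.
Qed.

Lemma pow_iso_img_line (gT : finGroupType) (h : H -> gT) (f : gT -> H) :
    cancel h f -> cancel f h -> (forall u v, pow_cmp (h u) (h v) = pow_cmp u v) ->
  forall e : E, e != 1 -> exists x, h @: <[line e]> = <[x]>.
Proof.
move=> hK fK h_cmp e e_neq1; have nbhd_e := pow_nbhd_line e_neq1.
have lt_e := order_line_lt e_neq1.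
have [n1 | n_gt1] := leqP n 1.
  apply: (pow_iso_img_cycle_prime hK fK h_cmp nbhd_e lt_e).
  by rewrite order_line // (_ : n = 1%N) ?muln1 //; apply/eqP; rewrite eqn_leq n1.
apply: (pow_iso_img_cycle_coprime hK fK h_cmp nbhd_e lt_e ZppZn_twins (order_line e_neq1)).
- by rewrite coprime_sym.
- exact: prime_gt1.
- exact: n_gt1.
Qed.

End ZppZn.

Lemma cycle_cover_isog_ZppZn (gT : finGroupType) p n (K : {group gT}) :
    prime p -> 0 < n -> coprime n p -> #|K| = n -> #|gT| = (p ^ 2 * n)%N ->
    (forall g : gT, exists x, [/\ g \in <[x]>, K \subset <[x]> & #[x] = (p * n)%N]) ->
  [set: gT] \isog [set: ZppZn p n].
Proof.
move=> p_pr n_gt0 np_coprime card_K card_G cover.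
have p_gt0 := prime_gt0 p_pr.
have [x1 [_ K_x1 _]] := cover 1.
have cyc_K : cyclic K := cyclicS K_x1 (cycle_cyclic x1).
have K_central : K \subset 'C([set: gT]).
  apply/centsP=> k k_K g _; have [x [g_x K_x _]] := cover g.
  exact: (centsP (cycle_abelian x)) k (subsetP K_x k k_K) g g_x.
have expp_K (g : gT) : g ^+ p \in K.
  have [x [g_x K_x o_x]] := cover g.
  rewrite -cycle_subG -(cardSg_cyclic (cycle_cyclic x)) ?cycle_subG ?groupX //.
  by rewrite card_K order_dvdn -expgM -order_dvdn -o_x order_dvdG.
have [P sylP] := Sylow_exists p [set: gT].
have card_P : #|P| = (p ^ 2)%N.
  rewrite (card_Hall sylP) cardsT card_G partnM ?expn_gt0 ?p_gt0 //.
  rewrite part_pnat_id ?pnatX ?pnat_id // part_p'nat ?muln1 //.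
  by rewrite p'natE // -prime_coprime // coprime_sym.
have PK_TI : P :&: K = 1.
  by apply: coprime_TIg; rewrite card_P card_K coprime_pexpl // coprime_sym.
have abelP : p.-abelem P.
  apply/(abelemP p_pr); split; first exact: card_p2group_abelian p_pr card_P.
  by move=> g P_g; apply/set1gP; rewrite -PK_TI inE groupX ?expp_K.
apply: (dprod_isog_ZppZn p_pr n_gt0 _ abelP card_P cyc_K card_K).
rewrite dprodE ?(subset_trans K_central) ?centS ?subsetT //.
by apply/eqP; rewrite eqEcard subsetT cardsT card_G /= TI_cardMg // card_P card_K.
Qed.

Lemma pow_graph_iso_isog_ZppZn (gT : finGroupType) p n :
    prime p -> 0 < n -> coprime n p ->
  pow_graph_iso gT (ZppZn p n) -> [set: gT] \isog [set: ZppZn p n].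
Proof.
move=> p_pr n_gt0 np_coprime /pow_graph_iso_cmp[h [f [hK fK h_cmp]]].
have img_line := pow_iso_img_line p_pr n_gt0 np_coprime hK fK h_cmp.
have h_inj := can_inj hK.
have [x1 def_x1] := img_line _ (e1_neq1 p_pr).
have [x2 def_x2] := img_line _ (e2_neq1 p_pr).
pose K := (<[x1]> :&: <[x2]>)%G.
have def_K : K :=: h @: setX 1 [set: Zmod n].
  by rewrite /= -def_x1 -def_x2 -imsetI ?line_cap // => u v _ _; apply: h_inj.
apply: (cycle_cover_isog_ZppZn (K := K)) => //.
- by rewrite def_K card_imset // card_cyc.
- by rewrite (card_pow_iso hK fK) card_ZppZn.
move=> g; have [e e_neq1 fg_e] := mem_cycle_line p_pr n_gt0 np_coprime (f g).
have [x def_x] := img_line e e_neq1.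
exists x; split.
- by rewrite -def_x -[g]fK imset_f.
- by rewrite def_K -def_x imsetS // cyc_sub_line.
by rewrite /order -def_x card_imset // -orderE order_line.
Qed.

Theorem corollary7 (gT : finGroupType) (p n : nat) :
  prime p -> 0 < n -> coprime n p ->
  (pow_graph_iso gT (ZppZn p n) <->
   ([set: gT] \isog [set: ZppZn p n])%g).
Proof.
move=> p_pr n_gt0 np_coprime; split; first exact: pow_graph_iso_isog_ZppZn.
exact: isog_pow_graph_iso.
Qed.
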